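(* Let $\lambda_1,\lambda_2$ and $\Omega$ be as in the context, let $(c,\theta)\in\Omega$, $D=\sin\theta/c$, and let $\varphi$ be the solution of $$\varphi'(u)=\sqrt{c^2+2\cos\theta\,B-D^2B^2},\qquad \varphi(0)=0,\qquad\text{where } B=\lambda_1^2\cos^2\varphi(u)+\lambda_2^2\sin^2\varphi(u).$$ Then: (1) $\varphi$ is a well-defined increasing bijection from $\mathbb{R}$ to $\mathbb{R}$; (2) $\varphi$ is odd; (3) there exists a real number $U>0$ such that $\varphi(u+U)=\varphi(u)+\pi$ for all $u\in\mathbb{R}$; (4) $\varphi(kU)=k\pi$ for all $k\in\mathbb{Z}$; (5) $\varphi(kU/2)=k\pi/2$ for all odd integers $k$.
   Context: Either $\lambda_1>\lambda_2>0$ or $\lambda_1=\lambda_2=1$. For $c>0$ put $\theta_c^+=\pi$ if $c>\sqrt2\lambda_1$ and $\theta_c^+=\arccos(1-c^2/\lambda_1^2)\in(0,\pi]$ if $0<c\le\sqrt2\lambda_1$. $\Omega=\{(c,\theta)\in\mathbb{R}^2: c>0,\ \theta\in(-\theta_c^+,\theta_c^+)\}$. *)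

From Stdlib Require Import Reals ZArith.
Open Scope R_scope.

Definition lambda_hyp (l1 l2 : R) : Prop :=
  (l1 > l2 /\ l2 > 0) \/ (l1 = 1 /\ l2 = 1).

Definition theta_plus (l1 c : R) : R :=
  if Rlt_dec (sqrt 2 * l1) c then PI else acos (1 - c ^ 2 / l1 ^ 2).

Definition in_Omega (l1 c th : R) : Prop :=
  0 < c /\ - theta_plus l1 c < th < theta_plus l1 c.

Definition Bfun (l1 l2 x : R) : R :=
  l1 ^ 2 * (cos x) ^ 2 + l2 ^ 2 * (sin x) ^ 2.

Definition Ffun (l1 l2 c th x : R) : R :=
  let B := Bfun l1 l2 x in
  let D := sin th / c in
  sqrt (c ^ 2 + 2 * cos th * B - D ^ 2 * B ^ 2).

Definition is_solution (l1 l2 c th : R) (phi : R -> R) : Prop :=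
  phi 0 = 0 /\ forall u, derivable_pt_lim phi u (Ffun l1 l2 c th (phi u)).

From Stdlib Require Import Reals Ranalysis5 ZArith Lra.
From Coquelicot Require Import Coquelicot.
Open Scope R_scope.

(* Since F := Ffun is positive, the autonomous equation phi' = F(phi) is solved by
   inverting Psi(x) = int_0^x dt / F(t): every solution satisfies Psi (phi u) = u,
   and the inverse of Psi is a solution.  So phi inherits monotonicity and
   bijectivity from Psi, and the symmetries of F (even and pi-periodic, as B only
   involves cos^2 and sin^2) become Psi (-x) = - Psi x and
   Psi (x + pi) = Psi x + Psi pi; hence U = Psi pi, and (5) comes from
   Psi (pi/2) = Psi pi / 2 (periodicity at x = -pi/2 plus oddness).  The same
   relation Psi (k pi) = k Psi pi shows that Psi is onto.  F is positive because
   its radicand is (c^2 - B (1 - cos th)) (c^2 + B (1 + cos th)) / c^2 with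
   0 < B <= l1^2, and (c, th) in Omega amounts to l1^2 (1 - cos th) < c^2. *)

Lemma eq_of_is_derive (f g df dg : R -> R) :
  (forall x, is_derive f x (df x)) -> (forall x, is_derive g x (dg x)) ->
  (forall x, df x = dg x) -> f 0 = g 0 -> forall x, f x = g x.
Proof.
  intros Hf Hg Hd H0 x.
  assert (Hfg : forall t, is_derive (fun s => f s - g s) t 0).
  { intros t. replace 0 with (df t - dg t) by (rewrite Hd; ring).
    exact (is_derive_minus f g t _ _ (Hf t) (Hg t)). }
  destruct (Rtotal_order x 0) as [Hx | [-> | Hx]]; [| exact H0 |].
  - pose proof (eq_is_derive _ x 0 (fun t _ => Hfg t) Hx). simpl in *. lra.
  - pose proof (eq_is_derive _ 0 x (fun t _ => Hfg t) Hx). simpl in *. lra.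
Qed.

Lemma strict_incr_of_is_derive (f df : R -> R) :
  (forall x, is_derive f x (df x)) -> (forall x, 0 < df x) ->
  forall x y, x < y -> f x < f y.
Proof.
  intros Hf Hdf x y Hxy.
  apply (incr_function f m_infty p_infty df); simpl; intros; trivial; apply Hdf.
Qed.

Section Inverse.

Variables f g df : R -> R.
Hypothesis f_derive : forall x, is_derive f x (df x).
Hypothesis df_pos : forall x, 0 < df x.
Hypothesis f_g : forall y, f (g y) = y.

Let f_incr := strict_incr_of_is_derive f df f_derive df_pos.

Lemma inverse_cancel_l x : g (f x) = x.
Proof.
  destruct (Rtotal_order (g (f x)) x) as [H | [H | H]]; trivial;
    apply f_incr in H; rewrite f_g in H; lra.
Qed.

Lemma inverse_le x y : x <= y -> g x <= g y.
Proof.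
  intros Hxy. destruct (Rle_lt_dec (g x) (g y)) as [H | H]; trivial.
  apply f_incr in H. rewrite !f_g in H. lra.
Qed.

Lemma is_derive_inverse y : is_derive g y (/ df (g y)).
Proof.
  apply is_derive_Reals.
  set (lb := g y - 1); set (ub := g y + 1).
  assert (f_cont : forall a, continuity_pt f a).
  { intros a. apply derivable_continuous_pt. exists (df a). apply is_derive_Reals, f_derive. }
  assert (g_cont : continuity_pt g y).
  { apply (continuity_pt_recip_interv f g lb ub); try (unfold lb, ub; lra).
    - intros a b _ Hab _. now apply f_incr.
    - intros a _ _. apply f_g.
    - intros a Ha Hb. rewrite <- (inverse_cancel_l lb), <- (inverse_cancel_l ub).
      split; now apply inverse_le.
    - intros a _. apply f_cont.
    - rewrite <- (f_g y). split; apply f_incr; unfold lb, ub; lra. }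
  assert (f_derivable : forall a, g (y - 1) <= a <= g (y + 1) -> derivable_pt f a).
  { intros a _. exists (df a). apply is_derive_Reals, f_derive. }
  assert (g_between : g (y - 1) <= g y <= g (y + 1)) by (split; apply inverse_le; lra).
  pose proof (derivable_pt_lim_recip_interv f g (y - 1) (y + 1) y f_derivable g_cont
    ltac:(lra) ltac:(lra) g_between) as Hg.
  rewrite (derive_pt_eq_0 _ _ _ _ (proj1 (is_derive_Reals _ _ _) (f_derive (g y)))) in Hg.
  rewrite <- Rdiv_1_l. apply Hg.
  - intros a _. apply f_g.
  - apply Rgt_not_eq, df_pos.
Qed.

End Inverse.

Definition integral_inv (F : R -> R) (x : R) : R := RInt (fun t => / F t) 0 x.

Section Integral_inv.

Variables (F : R -> R) (p : R).
Hypothesis F_pos : forall x, 0 < F x.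
Hypothesis F_cont : forall x, continuous F x.
Hypothesis F_even : forall x, F (- x) = F x.
Hypothesis F_periodic : forall x, F (x + p) = F x.
Hypothesis p_pos : 0 < p.

Let Psi := integral_inv F.

Lemma continuous_inv_F x : continuous (fun t => / F t) x.
Proof. apply continuous_Rinv_comp; [apply F_cont | apply Rgt_not_eq, F_pos]. Qed.

Lemma is_derive_integral_inv x : is_derive Psi x (/ F x).
Proof.
  apply (is_derive_RInt (fun t => / F t) Psi 0 x); [| apply continuous_inv_F].
  apply filter_forall; intros b. apply (@RInt_correct R_CompleteNormedModule).
  apply (@ex_RInt_continuous R_CompleteNormedModule). intros; apply continuous_inv_F.
Qed.

Lemma integral_inv_0 : Psi 0 = 0.
Proof. exact (RInt_point 0 (fun t => / F t)). Qed.

Lemma integral_inv_lt x y : x < y -> Psi x < Psi y.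
Proof.
  apply (strict_incr_of_is_derive Psi (fun t => / F t) is_derive_integral_inv).
  intros t; apply Rinv_0_lt_compat, F_pos.
Qed.

Lemma integral_inv_inj x y : Psi x = Psi y -> x = y.
Proof.
  intros E. destruct (Rtotal_order x y) as [H | [H | H]]; trivial;
    apply integral_inv_lt in H; lra.
Qed.

Lemma integral_inv_opp x : Psi (- x) = - Psi x.
Proof.
  apply (eq_of_is_derive (fun t => Psi (- t)) (fun t => - Psi t)
    (fun t => -1 * / F (- t)) (fun t => - / F t)); clear x.
  - intros x. exact (is_derive_comp Psi Ropp x _ _ (is_derive_integral_inv (- x))
      (is_derive_opp _ x _ (is_derive_id x))).
  - intros x. exact (is_derive_opp Psi x _ (is_derive_integral_inv x)).
  - intros x. rewrite F_even. ring.
  - rewrite Ropp_0, integral_inv_0. ring.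
Qed.

Lemma integral_inv_add_period x : Psi (x + p) = Psi x + Psi p.
Proof.
  apply (eq_of_is_derive (fun t => Psi (t + p)) (fun t => Psi t + Psi p)
    (fun t => (1 + 0) * / F (t + p)) (fun t => / F t + 0)); clear x.
  - intros x. exact (is_derive_comp Psi (fun t => t + p) x _ _
      (is_derive_integral_inv (x + p))
      (is_derive_plus _ _ x _ _ (is_derive_id x) (is_derive_const p x))).
  - intros x.
    exact (is_derive_plus Psi _ x _ _ (is_derive_integral_inv x) (is_derive_const _ x)).
  - intros x. rewrite F_periodic. ring.
  - rewrite Rplus_0_l, integral_inv_0. ring.
Qed.

Lemma integral_inv_add_Zperiod x k : Psi (x + IZR k * p) = Psi x + IZR k * Psi p.
Proof.
  induction k as [| k IH | k IH] using Z.peano_ind.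
  - rewrite !Rmult_0_l, !Rplus_0_r. reflexivity.
  - rewrite succ_IZR, Rmult_plus_distr_r, Rmult_1_l, <- Rplus_assoc.
    rewrite integral_inv_add_period, IH. ring.
  - rewrite <- Z.sub_1_r, minus_IZR in *.
    replace (x + IZR k * p) with (x + (IZR k - 1) * p + p) in IH by ring.
    rewrite integral_inv_add_period in IH. lra.
Qed.

Lemma integral_inv_half_period : Psi (p / 2) = Psi p / 2.
Proof.
  pose proof (integral_inv_add_period (- (p / 2))) as E.
  replace (- (p / 2) + p) with (p / 2) in E by field.
  rewrite integral_inv_opp in E. lra.
Qed.

Lemma integral_inv_period_pos : 0 < Psi p.
Proof. rewrite <- integral_inv_0. now apply integral_inv_lt. Qed.

Lemma integral_inv_surj y : {x | Psi x = y}.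
Proof.
  set (k := up (Rabs y / Psi p)).
  assert (Hk : Rabs y < IZR k * Psi p).
  { pose proof integral_inv_period_pos.
    replace (Rabs y) with (Rabs y / Psi p * Psi p) by (field; lra).
    apply Rmult_lt_compat_r; trivial. apply archimed. }
  assert (Hcont : continuity Psi).
  { intros t. apply derivable_continuous_pt. exists (/ F t).
    apply is_derive_Reals, is_derive_integral_inv. }
  pose proof (integral_inv_add_Zperiod 0 k) as Hb.
  pose proof (integral_inv_add_Zperiod 0 (- k)) as Ha.
  rewrite Rplus_0_l, integral_inv_0, Rplus_0_l in Ha, Hb. rewrite opp_IZR in Ha.
  pose proof (Rle_abs y). pose proof (Rle_abs (- y)). rewrite Rabs_Ropp in *.
  destruct (IVT_gen Psi (IZR (- k) * p) (IZR k * p) y Hcont) as [x [_ Hx]].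
  - rewrite opp_IZR, Ha, Hb. split.
    + apply Rle_trans with (- IZR k * Psi p); [apply Rmin_l | lra].
    + apply Rle_trans with (IZR k * Psi p); [lra | apply Rmax_r].
  - now exists x.
Qed.

Definition integral_inv_inverse (y : R) : R := proj1_sig (integral_inv_surj y).

Let phi0 := integral_inv_inverse.

Lemma integral_inv_of_inverse y : Psi (phi0 y) = y.
Proof. exact (proj2_sig (integral_inv_surj y)). Qed.

Lemma integral_inv_inverse_0 : phi0 0 = 0.
Proof. apply integral_inv_inj. now rewrite integral_inv_of_inverse, integral_inv_0. Qed.

Lemma is_derive_integral_inv_inverse y : is_derive phi0 y (F (phi0 y)).
Proof.
  rewrite <- (Rinv_inv (F (phi0 y))).
  apply (is_derive_inverse Psi phi0 (fun t => / F t)).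
  - exact is_derive_integral_inv.
  - intros t. apply Rinv_0_lt_compat, F_pos.
  - exact integral_inv_of_inverse.
Qed.

Section Solution.

Variable phi : R -> R.
Hypothesis phi_0 : phi 0 = 0.
Hypothesis phi_derive : forall u, is_derive phi u (F (phi u)).

Lemma integral_inv_solution u : Psi (phi u) = u.
Proof.
  apply (eq_of_is_derive (fun t => Psi (phi t)) (fun t => t)
    (fun t => F (phi t) * / F (phi t)) (fun _ => 1)); clear u.
  - intros u.
    exact (is_derive_comp Psi phi u _ _ (is_derive_integral_inv (phi u)) (phi_derive u)).
  - exact is_derive_id.
  - intros u. apply Rinv_r, Rgt_not_eq, F_pos.
  - now rewrite phi_0, integral_inv_0.
Qed.

Lemma solution_integral_inv x : phi (Psi x) = x.
Proof. apply integral_inv_inj. now rewrite integral_inv_solution. Qed.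

Lemma solution_lt x y : x < y -> phi x < phi y.
Proof.
  intros Hxy. rewrite <- (integral_inv_solution x), <- (integral_inv_solution y) in Hxy.
  destruct (Rlt_le_dec (phi x) (phi y)) as [H | [H | H]]; trivial.
  - apply integral_inv_lt in H. lra.
  - rewrite H in Hxy. lra.
Qed.

Lemma solution_inj x y : phi x = phi y -> x = y.
Proof.
  intros E. rewrite <- (integral_inv_solution x), <- (integral_inv_solution y). now rewrite E.
Qed.

Lemma solution_surj y : exists x, phi x = y.
Proof. exists (Psi y). apply solution_integral_inv. Qed.

Lemma solution_opp u : phi (- u) = - phi u.
Proof.
  rewrite <- (integral_inv_solution u) at 1.
  now rewrite <- integral_inv_opp, solution_integral_inv.
Qed.

Lemma solution_add_period u : phi (u + Psi p) = phi u + p.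
Proof.
  rewrite <- (integral_inv_solution u) at 1.
  now rewrite <- integral_inv_add_period, solution_integral_inv.
Qed.

Lemma solution_Zperiod k : phi (IZR k * Psi p) = IZR k * p.
Proof.
  rewrite <- (Rplus_0_l (IZR k * Psi p)), <- integral_inv_0 at 1.
  now rewrite <- integral_inv_add_Zperiod, solution_integral_inv, Rplus_0_l.
Qed.

Lemma solution_odd_half_period k :
  Z.odd k = true -> phi (IZR k * Psi p / 2) = IZR k * p / 2.
Proof.
  intros Hk. apply Z.odd_spec in Hk as [j ->].
  rewrite plus_IZR, mult_IZR.
  replace ((2 * IZR j + 1) * Psi p / 2) with (Psi p / 2 + IZR j * Psi p) by field.
  rewrite <- integral_inv_half_period, <- integral_inv_add_Zperiod, solution_integral_inv.
  field.
Qed.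

End Solution.

Lemma solution_unique (phi psi : R -> R) :
  phi 0 = 0 -> (forall u, is_derive phi u (F (phi u))) ->
  psi 0 = 0 -> (forall u, is_derive psi u (F (psi u))) ->
  forall u, phi u = psi u.
Proof.
  intros phi_0 phi_derive psi_0 psi_derive u.
  apply integral_inv_inj.
  now rewrite (integral_inv_solution phi), (integral_inv_solution psi).
Qed.

End Integral_inv.

Lemma radicand_factor c th B : c <> 0 ->
  c ^ 2 + 2 * cos th * B - (sin th / c) ^ 2 * B ^ 2 =
  (c ^ 2 - B * (1 - cos th)) * (c ^ 2 + B * (1 + cos th)) / c ^ 2.
Proof.
  intros Hc.
  assert (Hs : sin th ^ 2 = 1 - cos th ^ 2) by (rewrite <- !Rsqr_pow2; apply sin2).
  replace ((sin th / c) ^ 2) with (sin th ^ 2 / c ^ 2) by (field; exact Hc).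
  rewrite Hs. field. exact Hc.
Qed.

Section Omega.

Variables l1 l2 c th : R.
Hypothesis Hl : lambda_hyp l1 l2.
Hypothesis HO : in_Omega l1 c th.

Lemma Bfun_pos x : 0 < Bfun l1 l2 x.
Proof.
  assert (Bfun l1 l2 x = l2 ^ 2 + (l1 ^ 2 - l2 ^ 2) * cos x ^ 2) as ->.
  { unfold Bfun. rewrite <- !Rsqr_pow2, sin2. ring. }
  assert (0 < l2 ^ 2 <= l1 ^ 2) by (simpl; destruct Hl; split; nra).
  pose proof (pow2_ge_0 (cos x)). nra.
Qed.

Lemma Bfun_le x : Bfun l1 l2 x <= l1 ^ 2.
Proof.
  assert (Bfun l1 l2 x = l1 ^ 2 - (l1 ^ 2 - l2 ^ 2) * sin x ^ 2) as ->.
  { unfold Bfun. rewrite <- !Rsqr_pow2, cos2. ring. }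
  assert (0 < l2 ^ 2 <= l1 ^ 2) by (simpl; destruct Hl; split; nra).
  pose proof (pow2_ge_0 (sin x)). nra.
Qed.

Lemma in_Omega_cos_bound : l1 ^ 2 * (1 - cos th) < c ^ 2.
Proof.
  destruct HO as [Hc Hth]. unfold theta_plus in Hth.
  assert (Hl1 : 0 < l1) by (destruct Hl; lra).
  assert (Hsqrt2 : sqrt 2 * sqrt 2 = 2) by (apply sqrt_sqrt; lra).
  assert (0 < sqrt 2) by (apply sqrt_lt_R0; lra).
  destruct (Rlt_dec (sqrt 2 * l1) c) as [Hc2 | Hc2].
  - assert (2 * l1 ^ 2 < c ^ 2).
    { assert (0 < sqrt 2 * l1) by nra.
      assert (sqrt 2 * l1 * (sqrt 2 * l1) < c * c) by nra. nra. }
    pose proof (COS_bound th). nra.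
  - set (q := c ^ 2 / l1 ^ 2) in Hth.
    assert (Hq : c ^ 2 = q * l1 ^ 2) by (unfold q; field; lra).
    clearbody q.
    assert (0 < l1 ^ 2) by nra.
    assert (c ^ 2 <= 2 * l1 ^ 2) by (apply Rnot_lt_le in Hc2; nra).
    assert (Ha : -1 <= 1 - q <= 1).
    { pose proof (pow2_ge_0 c). split; apply Rmult_le_reg_r with (l1 ^ 2). all: nra. }
    assert (Hcos : 1 - q < cos th).
    { rewrite <- (cos_acos _ Ha). pose proof (acos_bound (1 - q)).
      destruct (Rle_lt_dec 0 th).
      - apply cos_decreasing_1; lra.
      - rewrite <- (cos_neg th). apply cos_decreasing_1; lra. }
    rewrite Hq. nra.
Qed.

Lemma Ffun_pos x : 0 < Ffun l1 l2 c th x.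
Proof.
  destruct HO as [Hc _].
  apply sqrt_lt_R0. rewrite radicand_factor by lra.
  pose proof (Bfun_pos x). pose proof (Bfun_le x). pose proof in_Omega_cos_bound.
  pose proof (COS_bound th).
  apply Rdiv_lt_0_compat; [apply Rmult_lt_0_compat |]; nra.
Qed.

End Omega.

Lemma continuous_Ffun l1 l2 c th x : continuous (Ffun l1 l2 c th) x.
Proof.
  apply continuous_sqrt_comp, (@ex_derive_continuous R_AbsRing R_NormedModule).
  unfold Bfun. auto_derive. trivial.
Qed.

Lemma Ffun_opp l1 l2 c th x : Ffun l1 l2 c th (- x) = Ffun l1 l2 c th x.
Proof. unfold Ffun, Bfun. now rewrite cos_neg, sin_neg, <- !Rsqr_pow2, <- Rsqr_neg. Qed.

Lemma Ffun_add_PI l1 l2 c th x : Ffun l1 l2 c th (x + PI) = Ffun l1 l2 c th x.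
Proof. unfold Ffun, Bfun. now rewrite neg_cos, neg_sin, <- !Rsqr_pow2, <- !Rsqr_neg. Qed.

Theorem proposition5p1 (l1 l2 c th : R)
  (Hl : lambda_hyp l1 l2) (HO : in_Omega l1 c th) :
  (* (1) well-defined: existence and uniqueness of the global solution *)
  (exists phi : R -> R, is_solution l1 l2 c th phi) /\
  (forall phi psi : R -> R, is_solution l1 l2 c th phi ->
     is_solution l1 l2 c th psi -> forall u, phi u = psi u) /\
  (forall phi : R -> R, is_solution l1 l2 c th phi ->
     (* (1) increasing bijection R -> R *)
     ((forall x y, x < y -> phi x < phi y) /\
      (forall x y, phi x = phi y -> x = y) /\
      (forall y, exists x, phi x = y)) /\
     (* (2) odd *)
     (forall u, phi (- u) = - phi u) /\
     (* (3)-(5) *)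
     (exists U : R, 0 < U /\
        (forall u, phi (u + U) = phi u + PI) /\
        (forall k : Z, phi (IZR k * U) = IZR k * PI) /\
        (forall k : Z, Z.odd k = true -> phi (IZR k * U / 2) = IZR k * PI / 2))).
Proof.
  set (F := Ffun l1 l2 c th).
  pose proof (Ffun_pos l1 l2 c th Hl HO) as F_pos.
  pose proof (continuous_Ffun l1 l2 c th) as F_cont.
  pose proof (Ffun_opp l1 l2 c th) as F_even.
  pose proof (Ffun_add_PI l1 l2 c th) as F_periodic.
  pose proof PI_RGT_0 as PI_pos.
  assert (is_derive_solution : forall phi, is_solution l1 l2 c th phi ->
    forall u, is_derive phi u (F (phi u))) by (intros phi [_ H] u; now apply is_derive_Reals).
  split; [| split].
  - exists (integral_inv_inverse F PI F_pos F_cont F_periodic PI_pos). split.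
    + now apply integral_inv_inverse_0.
    + intros u. now apply is_derive_Reals, is_derive_integral_inv_inverse.
  - intros phi psi Hphi Hpsi.
    apply (solution_unique F F_pos F_cont); [apply Hphi | auto | apply Hpsi | auto].
  - intros phi Hphi. pose proof (is_derive_solution phi Hphi) as phi_derive.
    destruct Hphi as [phi_0 _].
    split; [split; [| split] | split].
    + eapply solution_lt; eassumption.
    + eapply solution_inj; eassumption.
    + eapply solution_surj; eassumption.
    + eapply solution_opp; eassumption.
    + exists (integral_inv F PI). split; [| split; [| split]].
      * eapply integral_inv_period_pos; eassumption.
      * eapply solution_add_period; eassumption.
      * eapply solution_Zperiod; eassumption.
      * eapply solution_odd_half_period; eassumption.
Qed.
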